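(* In the setting described in the context, let $\rho:\mathbb{R}^n\to[0,\infty)$ be continuous and $\phi:[0,\infty)\to[0,\infty)$ be continuous and nondecreasing, and suppose that (in addition to the bounds on $\alpha$) $\alpha(x)=\phi(\rho(x))$ for all $x\in\mathbb{R}^n$. Assume further that there exists a nondecreasing function $\Gamma:[0,\infty)\to[0,\infty)$ such that $\inf_{u\in U}\rho(f(x,u))=\Gamma(\rho(x))$ for all $x\in\mathbb{R}^n$. Then $\inf_{u\in U}\mathcal{V}(\{f(x,u)\})<\mathcal{V}(\{x\})$ and $\inf_{u\in U}\mathcal{W}(\{f(x,u)\})<\mathcal{W}(\{x\})$ for all $x\in\mathcal{D}_{\mathcal{A}}\setminus\mathcal{A}$.
   Context: Let $\|\cdot\|$ be a norm on $\mathbb{R}^n$ and $\mathrm{dist}(x,\Omega):=\inf_{y\in\Omega}\|x-y\|$. Let $\mathcal{K}(\mathbb{R}^n)$ denote the nonempty compact subsets of $\mathbb{R}^n$. Consider $x_{k+1}=f(x_k,u_k)$ with $f:\mathbb{R}^n\times\mathbb{R}^m\to\mathbb{R}^n$ continuous and inputs $u_k\in U$, $U\subset\mathbb{R}^m$ nonempty compact. For $x\in\mathbb{R}^n$ and $\pi:\mathbb{Z}_+\to U$, $\varphi_x^\pi(0)=x$, $\varphi_x^\pi(k+1)=f(\varphi_x^\pi(k),\pi(k))$; $\mathcal{R}(X,k):=\{\varphi_x^\pi(k):x\in X,\pi\in U^{\mathbb{Z}_+}\}$. Let $\mathcal{A}\in\mathcal{K}(\mathbb{R}^n)$ be controlled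 invariant. Assume local $\ell_p$-stabilizability: there exist $r>0$, $M\ge1$, $p>0$, $\lambda:[0,r]\times\mathbb{Z}_+\to\mathbb{R}_+$ such that (1) for each $k$, $s\mapsto\lambda(s,k)$ is continuous, nondecreasing, $\lambda(0,k)=0$; for each $s$, $k\mapsto\lambda(s,k)$ is nonincreasing, $\lambda(s,0)\le s$; (2) $\sum_{k}\lambda(r,k)^p<\infty$; (3) for every $x$ with $\mathrm{dist}(x,\mathcal{A})\le r$ there is $\pi\in U^{\mathbb{Z}_+}$ with $\mathrm{dist}(\varphi_x^\pi(k),\mathcal{A})\le M\lambda(\mathrm{dist}(x,\mathcal{A}),k)$ for all $k$. Let $\mathcal{D}_{\mathcal{A}}:=\{x:\exists\pi\in U^{\mathbb{Z}_+},\ \lim_{k\to\infty}\mathrm{dist}(\varphi_x^\pi(k),\mathcal{A})=0\}$. Let $\alpha:\mathbb{R}^n\to\mathbb{R}_+$ be continuous with $\underline{\alpha}\,\mathrm{dist}(x,\mathcal{A})^{\bar p}\le\alpha(x)\le\overline{\alpha}\,\mathrm{dist}(x,\mathcal{A})^{\bar p}$, constants $\underline{\alpha},\overline{\alpha}>0$, $\bar p\ge p$. Define $\Psi(X):=\inf_{y\in X}\alpha(y)$, $\mathcal{V}(X):=\sum_{k=0}^\infty\Psi(\mathcal{R}(X,k))\in[0,\infty]$, and $\mathcal{W}(X):=1-\exp(-\mathcal{V}(X))$ with the convention $\exp(-\infty)=0$. *)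

From HB Require Import structures.
From mathcomp Require Import all_boot all_order all_algebra.
From mathcomp Require Import all_classical all_reals all_analysis.
Set Implicit Arguments. Unset Strict Implicit. Unset Printing Implicit Defensive.
Import Order.TTheory GRing.Theory Num.Theory.
Import numFieldNormedType.Exports.
Local Open Scope classical_set_scope.
Local Open Scope ring_scope.

Section Defs.
Variables (R : realType) (n m : nat).
Notation X := 'rV[R]_n.
Notation Uv := 'rV[R]_m.

Definition is_norm (nrm : X -> R) : Prop :=
  [/\ forall x, 0 <= nrm x,
      forall x, nrm x = 0 -> x = 0,
      forall (a : R) x, nrm (a *: x) = `|a| * nrm x
    & forall x y, nrm (x + y) <= nrm x + nrm y].

Definition dist (nrm : X -> R) (x : X) (Om : set X) : R :=
  inf [set nrm (x - y) | y in Om].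

Fixpoint traj (f : X -> Uv -> X) (x : X) (pi : nat -> Uv) (k : nat) : X :=
  match k with
  | 0 => x
  | k'.+1 => f (traj f x pi k') (pi k')
  end.

Definition admissible (U : set Uv) (pi : nat -> Uv) : Prop := forall k, U (pi k).

Definition reach (f : X -> Uv -> X) (U : set Uv) (A : set X) (k : nat) : set X :=
  [set z | exists x pi, [/\ A x, admissible U pi & z = traj f x pi k]].

Definition controlled_invariant (f : X -> Uv -> X) (U : set Uv) (A : set X) :=
  forall x, A x -> exists2 u, U u & A (f x u).

Definition lp_stabilizable (nrm : X -> R) (f : X -> Uv -> X) (U : set Uv)
    (A : set X) (p : R) : Prop :=
  exists (r M : R) (lam : R -> nat -> R),
  (0 < r) /\ (1 <= M) /\
  (forall s k, 0 <= s <= r -> 0 <= lam s k) /\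
  (forall k, {within `[0, r], continuous (fun s => lam s k)}) /\
  (forall k, {in `[0, r] &, {homo (fun s => lam s k) : s t / s <= t}}) /\
  (forall k, lam 0 k = 0) /\
  (forall s, 0 <= s <= r -> {homo lam s : k l / (k <= l)%N >-> l <= k}) /\
  (forall s, 0 <= s <= r -> lam s 0 <= s) /\
  (\sum_(0 <= k <oo) ((lam r k `^ p)%:E) < +oo)%E /\
  (forall x, dist nrm x A <= r ->
     exists2 pi, admissible U pi &
       forall k, dist nrm (traj f x pi k) A <= M * lam (dist nrm x A) k).

Definition domain_attr (nrm : X -> R) (f : X -> Uv -> X) (U : set Uv)
    (A : set X) : set X :=
  [set x | exists2 pi, admissible U pi &
     (fun k => dist nrm (traj f x pi k) A) @ \oo --> (0 : R)].

Definition Psi (alpha : X -> R) (S : set X) : R := inf [set alpha y | y in S].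

Definition Vf (alpha : X -> R) (f : X -> Uv -> X) (U : set Uv) (S : set X)
  : \bar R := (\sum_(0 <= k <oo) (Psi alpha (reach f U S k))%:E)%E.

(* W(S) = 1 - exp(-V(S)), with exp(-oo) = 0 *)
Definition Wf (alpha : X -> R) (f : X -> Uv -> X) (U : set Uv) (S : set X) : R :=
  match Vf alpha f U S with
  | EFin v => 1 - expR (- v)
  | _ => 1
  end.

End Defs.

From HB Require Import structures.
From mathcomp Require Import all_boot all_order all_algebra.
From mathcomp Require Import all_classical all_reals all_analysis.
From mathcomp Require Import lra.
Import Order.TTheory GRing.Theory Num.Theory.
Import numFieldNormedType.Exports.
Local Open Scope classical_set_scope.
Local Open Scope ring_scope.
Set Implicit Arguments. Unset Strict Implicit. Unset Printing Implicit Defensive.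

(* Since alpha = phi o rho with phi nondecreasing, and the best one-step value
   inf_u rho (f w u) = Gamma (rho w) is nondecreasing in rho w, a control us
   minimizing rho (f x .) is optimal at every horizon: by induction on k, every
   state reachable in k steps from some f x u is dominated in rho by a state
   reachable in k steps from f x us.  Hence Psi (R({x}, k+1)) = Psi (R({f x us}, k))
   and V({x}) = alpha x + V({f x us}).  Here V({x}) is finite, because x in D_A is
   steered into the r-neighbourhood of A, after which l_p-stabilizability bounds
   the remaining terms by a multiple of lam(r, k)^p; and alpha x > 0, because x
   lies at positive distance from the compact set A.  So V, and with it
   W = 1 - exp (- V), decreases strictly along us. *)

Section Infimum.
Variable R : realType.
Implicit Types (E F : set R) (a : R).

Lemma inf_ge0 E : (forall a, E a -> 0 <= a) -> 0 <= inf E.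
Proof.
move=> E_ge0; have [->|/set0P[a Ea]] := eqVneq E set0; first by rewrite inf0.
by apply: lb_le_inf; [exists a | exact: E_ge0].
Qed.

Lemma inf_eq_min E a : E a -> lbound E a -> inf E = a.
Proof.
move=> Ea lbEa; apply/le_anti/andP; split; first by apply: ge_inf => //; exists a.
by apply: lb_le_inf => //; exists a.
Qed.

Lemma inf_le_dominated E F : E !=set0 -> has_lbound F ->
  (forall a, E a -> exists2 b, F b & b <= a) -> inf F <= inf E.
Proof.
move=> E0 lbF domEF; apply: lb_le_inf => // a /domEF[b Fb].
by apply: le_trans; exact: ge_inf.
Qed.

End Infimum.

Lemma nneseries_lty_tail_le (R : realType) (u v : nat -> R) (K : nat) (c : R) :
  (forall k, 0 <= u k) -> (forall k, 0 <= v k) ->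
  (forall k, u (K + k)%N <= c * v k) ->
  (\sum_(0 <= k <oo) (v k)%:E < +oo)%E -> (\sum_(0 <= k <oo) (u k)%:E < +oo)%E.
Proof.
move=> u_ge0 v_ge0 uv v_lty.
rewrite (@nneseries_split _ _ 0 K) ?add0n; last by move=> k _; rewrite lee_fin.
rewrite sumEFin -nneseries_addn; last by move=> k; rewrite lee_fin.
apply: lte_add_pinfty; first exact: ltry.
apply: (@le_lt_trans _ _ (\sum_(0 <= k <oo) (c%:E * (v k)%:E))%E).
  apply: lee_nneseries => [k _ _|k _]; first by rewrite lee_fin.
  by rewrite -EFinM lee_fin addnC.
rewrite nneseriesZl; last by move=> k _; rewrite lee_fin.
have : (\sum_(0 <= k <oo) (v k)%:E)%E \is a fin_num.
  by rewrite ge0_fin_numE // nneseries_ge0 // => k _ _; rewrite lee_fin.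
by move/fineK <-; rewrite -EFinM ltry.
Qed.

Lemma powR_le_split (R : realType) (l r p q : R) : 0 < p <= q -> 0 <= l <= r ->
  l `^ q <= r `^ (q - p) * l `^ p.
Proof.
move=> /andP[p0 pq] /andP[l0 lr].
have [->|l_neq0] := eqVneq l 0.
  by rewrite powR0 ?gt_eqF ?(lt_le_trans p0 pq) // mulr_ge0 // powR_ge0.
have -> : l `^ q = l `^ (q - p) * l `^ p.
  by rewrite -powRD ?l_neq0 ?implybT // subrK.
apply: ler_wpM2r; first exact: powR_ge0.
by rewrite ge0_ler_powR // ?nnegrE ?subr_ge0 //; exact: le_trans lr.
Qed.

Section Reachable.
Variables (R : realType) (n m : nat).
Variables (f : 'rV[R]_n -> 'rV[R]_m -> 'rV[R]_n) (U : set 'rV[R]_m).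

Lemma traj_ext x pi pi' k : (forall j, (j < k)%N -> pi j = pi' j) ->
  traj f x pi k = traj f x pi' k.
Proof.
elim: k => [//|k IHk] eq_pi /=.
by rewrite IHk ?eq_pi // => j jk; apply: eq_pi; exact: ltnW.
Qed.

Lemma traj_shift x pi k :
  traj f x pi k.+1 = traj f (f x (pi 0%N)) (fun j => pi j.+1) k.
Proof. by elim: k => //= k ->. Qed.

Lemma reach_cst x u k : U u -> reach f U [set x] k (traj f x (fun=> u) k).
Proof. by move=> Uu; exists x, (fun=> u); split. Qed.

Lemma reach0 x z : reach f U [set x] 0 z -> z = x.
Proof. by case=> _ [pi [/= -> _ ->]]. Qed.

Lemma reachS S k z : reach f U S k.+1 z <->
  exists w u, [/\ reach f U S k w, U u & z = f w u].
Proof.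
split=> [[x [pi [Sx adm ->]]]|[_ [u [[x [pi [Sx adm ->]] Uu ->]]]]].
  by exists (traj f x pi k), (pi k); split => //; exists x, pi.
exists x, (fun j => if j == k then u else pi j); split => //.
  by move=> j; case: ifP.
rewrite /= eqxx; congr f; apply: traj_ext => j jk.
by rewrite ltn_eqF.
Qed.

Lemma reachS1 x k z : reach f U [set x] k.+1 z <->
  exists2 u, U u & reach f U [set f x u] k z.
Proof.
split=> [[_ [pi [/= -> adm ->]]]|[u Uu [_ [pi [/= -> adm ->]]]]].
  exists (pi 0%N) => //; exists (f x (pi 0%N)), (fun j => pi j.+1).
  by split => //; exact: traj_shift.
exists x, (fun j => if j is j'.+1 then pi j' else u); split => //; first by case.
by rewrite traj_shift.
Qed.

Lemma reach_cat x pi pi' K k : admissible U pi -> admissible U pi' ->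
  reach f U [set x] (K + k)%N (traj f (traj f x pi K) pi' k).
Proof.
move=> adm adm'; pose pi2 j := if (j < K)%N then pi j else pi' (j - K)%N.
exists x, pi2; split => //; first by move=> j; rewrite /pi2; case: ifP.
elim: k => [|k /= ->].
  by rewrite addn0 /=; apply: traj_ext => j jK; rewrite /pi2 jK.
by rewrite addnS /= /pi2 ltnNge leq_addr /= addKn.
Qed.

Section RhoDominance.
Variable rho : 'rV[R]_n -> R.
Hypothesis step_dominated : forall w z u, rho w <= rho z -> U u ->
  exists2 u', U u' & rho (f w u') <= rho (f z u).

Lemma reach_rho_dominated k y y' z : rho y' <= rho y -> reach f U [set y] k z ->
  exists2 w, reach f U [set y'] k w & rho w <= rho z.
Proof.
elim: k z => [|k IHk] z le_y'y.
  move=> /[dup] /reach0 -> [_ [pi [_ adm _]]].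
  by exists y' => //; exists y', pi.
move=> /reachS[w0 [u [/(IHk _ le_y'y)[w1 reach_w1 le_w1w0] Uu ->]]].
have [u' Uu' le_u'u] := step_dominated le_w1w0 Uu.
by exists (f w1 u') => //; apply/reachS; exists w1, u'.
Qed.

End RhoDominance.
End Reachable.

Section Norm.
Variables (R : realType) (n : nat) (nrm : 'rV[R]_n -> R).
Hypothesis nrmP : is_norm nrm.

Lemma nrm0 : nrm 0 = 0.
Proof.
by case: nrmP => _ _ nrmZ _; rewrite -(scale0r (0 : 'rV[R]_n)) nrmZ normr0 mul0r.
Qed.

Lemma nrmN v : nrm (- v) = nrm v.
Proof. by case: nrmP => _ _ nrmZ _; rewrite -scaleN1r nrmZ normrN1 mul1r. Qed.

Lemma nrm_lip v w : `|nrm v - nrm w| <= nrm (v - w).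
Proof.
case: nrmP => _ _ _ nrmD.
have := nrmD (w - v) v; have := nrmD (v - w) w.
rewrite !subrK -[w - v]opprB nrmN ler_norml => ? ?; apply/andP; split; lra.
Qed.

Lemma nrm_le_mx_norm : exists2 C, 0 <= C & forall v, nrm v <= C * `|v|.
Proof.
case: nrmP => nrm_ge0 _ nrmZ nrmD.
have nrm_sum (I : Type) (s : seq I) (F : I -> 'rV[R]_n) :
    nrm (\sum_(j <- s) F j) <= \sum_(j <- s) nrm (F j).
  elim: s => [|a s IHs]; first by rewrite !big_nil nrm0.
  by rewrite !big_cons; apply: le_trans (nrmD _ _) _; exact: lerD.
exists (\sum_(j < n) nrm 'e_j); first by apply: sumr_ge0 => j _.
move=> v; rewrite {1}(row_sum_delta v); apply: le_trans (nrm_sum _ _ _) _.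
rewrite mulr_suml; apply: ler_sum => j _; rewrite nrmZ mulrC ler_wpM2l //.
rewrite [leRHS]mx_normrE.
exact: (le_bigmax _ (fun ij : 'I_1 * 'I_n => `|v ij.1 ij.2|) (0, j)).
Qed.

Lemma nrm_subl_continuous x : continuous (fun y : 'rV[R]_n => nrm (x - y)).
Proof.
have [C C0 nrmC] := nrm_le_mx_norm.
move=> v; apply/(@cvgrPdist_le _ _ _ _ (nbhs_filter v)) => e e0.
have eC0 : 0 < e / (C + 1) by rewrite divr_gt0 // ltr_wpDl.
near=> w.
apply: le_trans (nrm_lip _ _) _; rewrite opprB addrC addrA subrK.
apply: le_trans (nrmC _) _; rewrite distrC.
have : `|v - w| <= e / (C + 1).
  by near: w; exact: (@cvgr_dist_le _ _ _ _ (nbhs_filter v) id v (@cvg_id _ (nbhs v)) _ eC0).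
move=> /(ler_wpM2l C0) /le_trans; apply.
by rewrite mulrA ler_pdivrMr ?ltr_wpDl // mulrC ler_wpM2l ?(ltW e0) // lerDl.
Unshelve. all: by end_near.
Qed.

Lemma dist_ge0 A x : 0 <= dist nrm x A.
Proof. by case: nrmP => nrm_ge0 _ _ _; apply: inf_ge0 => _ [y _ <-]. Qed.

Lemma dist_gt0 A x : compact A -> A !=set0 -> ~ A x -> 0 < dist nrm x A.
Proof.
move=> cA A0 Ax; case: nrmP => nrm_ge0 nrm_eq0 _ _.
have cont_dist : {within A, continuous (fun y => nrm (x - y))}.
  exact/continuous_subspaceT/nrm_subl_continuous.
have [a /set_mem Aa min_a] := compact_EVT_min A0 cA cont_dist.
have -> : dist nrm x A = nrm (x - a).
  by apply: inf_eq_min => [|_ [y /mem_set Ay <-]]; [exists a | exact: min_a].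
rewrite lt_def nrm_ge0 andbT.
by apply: contra_notN Ax => /eqP/nrm_eq0/subr0_eq ->.
Qed.
End Norm.

Lemma exists_argmin_step (R : realType) (n m : nat)
    (f : 'rV[R]_n -> 'rV[R]_m -> 'rV[R]_n) (U : set 'rV[R]_m) (rho : 'rV[R]_n -> R) :
  continuous (fun xu : 'rV[R]_n * 'rV[R]_m => f xu.1 xu.2) -> continuous rho ->
  compact U -> U !=set0 ->
  forall w, exists2 u, U u & forall u', U u' -> rho (f w u) <= rho (f w u').
Proof.
move=> f_cont rho_cont cU U0 w.
have cont_step : {within U, continuous (fun u => rho (f w u))}.
  apply: continuous_subspaceT => u.
  apply: (@continuous_comp _ _ _ (fun u => (w, u)) (fun xu => rho (f xu.1 xu.2))).
    have w_cvg : (fun=> w) @ nbhs u --> nbhs w by exact: cvg_cst.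
    exact: (cvg_pair w_cvg (@cvg_id _ (nbhs u))).
  exact: continuous_comp (f_cont _) (rho_cont _).
have [u /set_mem Uu min_u] := compact_EVT_min U0 cU cont_step.
by exists u => // u' /mem_set; exact: min_u.
Qed.

Section Value.
Variables (R : realType) (n m : nat).
Variables (f : 'rV[R]_n -> 'rV[R]_m -> 'rV[R]_n) (U : set 'rV[R]_m).
Variable alpha : 'rV[R]_n -> R.
Hypothesis alpha_ge0 : forall x, 0 <= alpha x.

Lemma Psi_ge0 S : 0 <= Psi alpha S.
Proof. by apply: inf_ge0 => _ [y _ <-]. Qed.

Lemma Psi_le S z : S z -> Psi alpha S <= alpha z.
Proof. by move=> Sz; apply: ge_inf; [exists 0 => _ [y _ <-] | exists z]. Qed.

Lemma Vf_ge0 S : (0 <= Vf alpha f U S)%E.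
Proof. by apply: nneseries_ge0 => k _ _; rewrite lee_fin Psi_ge0. Qed.

Lemma Wf_ge0 S : 0 <= Wf alpha f U S.
Proof.
rewrite /Wf; case: (Vf alpha f U S) (Vf_ge0 S) => // v.
by rewrite lee_fin subr_ge0 expR_le1 oppr_le0.
Qed.

Lemma inf_Vf_Wf_lt x us a : U us -> 0 < a ->
  Vf alpha f U [set x] = (a%:E + Vf alpha f U [set f x us])%E ->
  (Vf alpha f U [set x] < +oo)%E ->
  (ereal_inf [set Vf alpha f U [set f x u] | u in U] < Vf alpha f U [set x])%E /\
  inf [set Wf alpha f U [set f x u] | u in U] < Wf alpha f U [set x].
Proof.
move=> Uus a0 Vx_split Vx_lty.
case E: (Vf alpha f U [set f x us]) (Vf_ge0 [set f x us]) => [v| |] // _; last first.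
  by move: Vx_lty; rewrite Vx_split E.
rewrite E -EFinD in Vx_split; split.
  apply: (@le_lt_trans _ _ v%:E); first by rewrite -E; apply: ereal_inf_lbound; exists us.
  by rewrite Vx_split lte_fin ltrDr.
apply: (@le_lt_trans _ _ (1 - expR (- v))).
  by apply: ge_inf; [exists 0 => _ [u _ <-]; exact: Wf_ge0 | exists us; rewrite // /Wf E].
by rewrite /Wf Vx_split ltrD2l ltrN2 ltr_expR ltrN2 ltrDr.
Qed.

Section Greedy.
Variables (rho : 'rV[R]_n -> R) (phi Gamma : R -> R).
Hypothesis rho_ge0 : forall x, 0 <= rho x.
Hypothesis phi_homo : {in `[0, +oo[ &, {homo phi : s t / s <= t}}.
Hypothesis alpha_phi_rho : forall x, alpha x = phi (rho x).
Hypothesis Gamma_homo : {in `[0, +oo[ &, {homo Gamma : s t / s <= t}}.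
Hypothesis inf_rho_step : forall x, inf [set rho (f x u) | u in U] = Gamma (rho x).
Hypothesis argmin_step :
  forall w, exists2 u, U u & forall u', U u' -> rho (f w u) <= rho (f w u').

Let rho_itv x : rho x \in `[0, +oo[.
Proof. by rewrite in_itv /= rho_ge0. Qed.

Lemma step_rho_dominated w z u : rho w <= rho z -> U u ->
  exists2 u', U u' & rho (f w u') <= rho (f z u).
Proof.
move=> le_wz Uu; have [u' Uu' min_u'] := argmin_step w; exists u' => //.
have -> : rho (f w u') = Gamma (rho w).
  by rewrite -inf_rho_step; apply/esym/inf_eq_min => [|_ [u'' /min_u' ? <-]]; first exists u'.
apply: le_trans (Gamma_homo (rho_itv _) (rho_itv _) le_wz) _.
by rewrite -inf_rho_step; apply: ge_inf; [exists 0 => _ [? _ <-] | exists u].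
Qed.

Lemma Psi_reachS_argmin x us k : U us ->
    (forall u, U u -> rho (f x us) <= rho (f x u)) ->
  Psi alpha (reach f U [set x] k.+1) = Psi alpha (reach f U [set f x us] k).
Proof.
move=> Uus min_us; have lbPsi S : has_lbound [set alpha y | y in S].
  by exists 0 => _ [y _ <-].
have reach_ne y k' : [set alpha z | z in reach f U [set y] k'] !=set0.
  by exists (alpha (traj f y (fun=> us) k')), (traj f y (fun=> us) k') => //; exact: reach_cst.
apply/le_anti/andP; split; apply: inf_le_dominated => //.
- by move=> _ [w reach_w <-]; exists (alpha w) => //; exists w => //; apply/reachS1; exists us.
- move=> _ [z /reachS1[u Uu reach_z] <-].
  have [w reach_w le_wz] := reach_rho_dominated step_rho_dominated (min_us _ Uu) reach_z.
  by exists (alpha w); [exists w | rewrite !alpha_phi_rho phi_homo ?rho_itv].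
Qed.

Lemma Vf_argmin_split x us : U us ->
    (forall u, U u -> rho (f x us) <= rho (f x u)) ->
  Vf alpha f U [set x] = ((alpha x)%:E + Vf alpha f U [set f x us])%E.
Proof.
move=> Uus min_us.
rewrite /Vf (@nneseries_split _ _ 0 1); last by move=> k _; rewrite lee_fin Psi_ge0.
rewrite add0n big_nat1; congr (_ + _)%E.
  congr EFin; apply: inf_eq_min => [|_ [z /reach0 -> <-]] //.
  by exists x => //; exact: (reach_cst _ _ 0 Uus).
rewrite -nneseries_addn; last by move=> k; rewrite lee_fin Psi_ge0.
by apply: eq_eseriesr => k _; rewrite addn1 (Psi_reachS_argmin _ Uus min_us).
Qed.

End Greedy.
End Value.

Lemma Vf_lt_pinfty (R : realType) (n m : nat) (nrm : 'rV[R]_n -> R)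
    (f : 'rV[R]_n -> 'rV[R]_m -> 'rV[R]_n) (U : set 'rV[R]_m) (A : set 'rV[R]_n)
    (alpha : 'rV[R]_n -> R) (ahi p pbar : R) x :
  is_norm nrm -> 0 < p <= pbar -> lp_stabilizable nrm f U A p -> 0 <= ahi ->
  (forall y, 0 <= alpha y) -> (forall y, alpha y <= ahi * dist nrm y A `^ pbar) ->
  domain_attr nrm f U A x -> (Vf alpha f U [set x] < +oo)%E.
Proof.
move=> nrmP /andP[p0 ppbar] [r [M [lam [r0 [M1 [lam_ge0 [_ [lam_homo [_ [lam_antiK
  [lam0_le [sum_lam stab]]]]]]]]]]]] ahi0 alpha_ge0 alpha_le [pi adm dist_cvg].
have [K _ /(_ K (leqnn K))] := cvgr_dist_le _ _ dist_cvg _ r0.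
rewrite sub0r normrN => /(le_trans (ler_norm _)) distK.
have [pi' adm' stab_z] := stab _ distK.
have M0 : 0 <= M := le_trans ler01 M1.
have lam_r k : 0 <= lam r k <= r.
  have r_itv : 0 <= r <= r by rewrite (ltW r0) lexx.
  by rewrite lam_ge0 //= (le_trans _ (lam0_le r r_itv)) // lam_antiK.
have dist_traj_le k : dist nrm (traj f (traj f x pi K) pi' k) A <= M * lam r k.
  apply: le_trans (stab_z k) _; rewrite ler_wpM2l // lam_homo // in_itv /=.
  - by rewrite (dist_ge0 nrmP) distK.
  - by rewrite (ltW r0) lexx.
have tail_le k : Psi alpha (reach f U [set x] (K + k)) <=
    ahi * M `^ pbar * r `^ (pbar - p) * lam r k `^ p.
  have [lam_rk_ge0 _] := andP (lam_r k).
  apply: le_trans (Psi_le alpha_ge0 (reach_cat _ _ _ _ adm adm')) _.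
  apply: le_trans (alpha_le _) _; rewrite -!mulrA ler_wpM2l //.
  apply: le_trans (ge0_ler_powR _ _ _ (dist_traj_le k)) _.
  - exact: le_trans (ltW p0) ppbar.
  - by rewrite nnegrE (dist_ge0 nrmP).
  - by rewrite nnegrE mulr_ge0.
  rewrite powRM // ler_wpM2l ?powR_ge0 //.
  by apply: powR_le_split; rewrite ?p0.
apply: (@nneseries_lty_tail_le _ (fun j => Psi alpha (reach f U [set x] j)) _ K _ _ _
  tail_le sum_lam) => i; [exact: Psi_ge0 | exact: powR_ge0].
Qed.

Unset Implicit Arguments. Set Strict Implicit.

Theorem theorem15 (R : realType) (n m : nat)
  (nrm : 'rV[R]_n -> R) (f : 'rV[R]_n -> 'rV[R]_m -> 'rV[R]_n)
  (U : set 'rV[R]_m) (A : set 'rV[R]_n)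
  (alpha : 'rV[R]_n -> R) (alo ahi pbar : R)
  (rho : 'rV[R]_n -> R) (phi Gamma : R -> R) :
  is_norm nrm ->
  continuous (fun xu : 'rV[R]_n * 'rV[R]_m => f xu.1 xu.2) ->
  compact U -> U !=set0 ->
  compact A -> A !=set0 ->
  controlled_invariant f U A ->
  (exists p : R, [/\ 0 < p, p <= pbar & lp_stabilizable nrm f U A p]) ->
  continuous alpha -> (forall x, 0 <= alpha x) ->
  0 < alo -> 0 < ahi ->
  (forall x, alo * dist nrm x A `^ pbar <= alpha x) ->
  (forall x, alpha x <= ahi * dist nrm x A `^ pbar) ->
  continuous rho -> (forall x, 0 <= rho x) ->
  {within `[0, +oo[, continuous phi} ->
  (forall s, 0 <= s -> 0 <= phi s) ->
  {in `[0, +oo[ &, {homo phi : s t / s <= t}} ->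
  (forall x, alpha x = phi (rho x)) ->
  (forall s, 0 <= s -> 0 <= Gamma s) ->
  {in `[0, +oo[ &, {homo Gamma : s t / s <= t}} ->
  (forall x, inf [set rho (f x u) | u in U] = Gamma (rho x)) ->
  forall x, domain_attr nrm f U A x -> ~ A x ->
    (ereal_inf [set Vf alpha f U [set f x u] | u in U] < Vf alpha f U [set x])%E /\
    inf [set Wf alpha f U [set f x u] | u in U] < Wf alpha f U [set x].
Proof.
move=> nrmP f_cont cU U0 cA A0 _ [p [p0 ppbar stab]] _ alpha_ge0 alo0 ahi0
  alpha_ge alpha_le rho_cont rho_ge0 _ _ phi_homo alpha_phi_rho _ Gamma_homo
  inf_rho_step x x_attr xNA.
have argmin_step := exists_argmin_step f_cont rho_cont cU U0.
have [us Uus min_us] := argmin_step x.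
have alpha_x_gt0 : 0 < alpha x.
  apply: lt_le_trans (alpha_ge x).
  by rewrite mulr_gt0 // powR_gt0 // dist_gt0.
apply: (inf_Vf_Wf_lt alpha_ge0 Uus alpha_x_gt0).
  exact: (Vf_argmin_split alpha_ge0 rho_ge0 phi_homo alpha_phi_rho Gamma_homo
    inf_rho_step argmin_step Uus min_us).
by apply: (Vf_lt_pinfty nrmP _ stab (ltW ahi0) alpha_ge0 alpha_le x_attr); rewrite p0.
Qed.
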